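(* For every integer $q\ge1$ and every integer $k\ge0$ with $k\ne q+2$, \[ \frac{q^{2}}{8(2k-2q-3)(k-q-2)}S_{q}(k)+\frac{4kq-4q^{2}+2k-7q-4}{4(2k-2q-3)(k-q-2)}\, S_{q+1}(k)+S_{q+2}(k)=0, \] where $S_q(k)=\sum_{l_1,l_2\in\mathbb Z}H_q(l_1,l_2,k)$.
   Context: $(z)_k=z(z+1)\cdots(z+k-1)$ denotes the rising factorial. For integers $l_1,l_2,k$ and $q\ge1$, \[ H_q(l_{1},l_{2},k)=\frac{(-1)^{l_1+l_2}\left(-\frac{1}{2}\right)_{l_1} \left(-\frac{1}{2}\right)_{l_2} \left(\frac{1}{2}\right)_{q-l_{1}} \left(\frac{1}{2}\right)_{q-l_{2}}}{(2q-l_{1}-l_{2}-k)!\,(l_{2}-l_{1}+k)!\,(l_{1}-l_{2}+k)!\,(l_{1}+l_{2}-k)!}, \] where Pochhammer symbols and factorials are expressed via the Gamma function, with $1/\Gamma$ vanishing at non-positive integers (so only finitely many terms are non-zero). *)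

From mathcomp Require Import all_boot all_order all_algebra.
Set Implicit Arguments. Unset Strict Implicit. Unset Printing Implicit Defensive.
Import Order.TTheory GRing.Theory Num.Theory.
Local Open Scope ring_scope.

(* Rising factorial (a)_n = Gamma(a+n)/Gamma(a) for an integer index n.
   n >= 0 : a (a+1) ... (a+n-1);
   n = -(m+1) < 0 : 1 / ((a-1)(a-2)...(a-m-1)). *)
Definition poch {R : fieldType} (a : R) (n : int) : R :=
  match n with
  | Posz m => \prod_(i < m) (a + i%:R)
  | Negz m => (\prod_(i < m.+1) (a - (i.+1)%:R))^-1
  end.

(* 1 / n! = 1 / Gamma(n+1) for an integer n, vanishing for n < 0. *)
Definition rfact {R : fieldType} (n : int) : R :=
  match n with
  | Posz m => (m`!%:R)^-1
  | Negz _ => 0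
  end.

Definition H {R : fieldType} (q : nat) (l1 l2 k : int) : R :=
  (-1) ^ (l1 + l2) * poch (- 2^-1) l1 * poch (- 2^-1) l2
  * poch (2^-1) (q%:Z - l1) * poch (2^-1) (q%:Z - l2)
  * rfact (2 * q%:Z - l1 - l2 - k) * rfact (l2 - l1 + k)
  * rfact (l1 - l2 + k) * rfact (l1 + l2 - k).

(* S_q(k) = sum over all (l1,l2) in Z^2 of H_q(l1,l2,k).  H_q(.,.,k) is
   supported in [0,q]^2, so the sum is taken over the
   window [-(q+k), q+k]^2, which contains the whole support. *)
Definition S {R : fieldType} (q k : nat) : R :=
  let N := (q + k)%N in
  \sum_(i < (N + N).+1) \sum_(j < (N + N).+1)
     H q (i%:Z - N%:Z) (j%:Z - N%:Z) k%:Z.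

(* Put u = 1 + XY and v = X + Y, and let lam_q be the linear functional on
   polynomials of degree at most 2q with lam_q(x^(2m)) = (-1)^(q-m) (-1/2)_(q-m) (1/2)_m
   and lam_q(x^(2m+1)) = 0.  Then (2q-2k)! (2k)! H_q(l1,l2,k) is the product of
   lam_q(x^(2(q-l1))), lam_q(x^(2(q-l2))) and the coefficient of X^(2(q-l1)) Y^(2(q-l2))
   in u^(2q-2k) v^(2k), so (2q-2k)! (2k)! S_q(k) = T(2q-2k, 2k), where T(a,b) is the value
   of lam_q (x) lam_q at u^a v^b.
   The functional lam_q kills (1 - x^2) f' + (2q-2) x f whenever deg f < 2q.  Applied
   in X to u^a v^b and to Y u^a v^b, and using the XY-symmetry of u and v, this yields
   linear recurrences for T which force S_q(k) = 0 for k >= 2 and express S_q(0) and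
   S_q(1) through T(2q-1, 0) = lam_q((1-x^2)^(q-1))^2 = ((q-1)!/2)^2.  The identity is
   then trivial for k >= 2 and a rational identity in q for k = 0, 1. *)

From HB Require Import structures.
From mathcomp Require Import all_boot all_order all_algebra.
From mathcomp Require Import ring lra zify.
Set Implicit Arguments. Unset Strict Implicit. Unset Printing Implicit Defensive.
Import Order.TTheory GRing.Theory Num.Theory.
Local Open Scope ring_scope.

Lemma poch_natS (R : fieldType) (a : R) (n : nat) : poch a n.+1 = poch a n * (a + n%:R).
Proof. by rewrite /poch big_ord_recr. Qed.

Lemma poch_natSl (R : fieldType) (a : R) (n : nat) :
  poch a n.+1 = a * poch (a + 1) n.
Proof.
rewrite /poch big_ord_recl /= addr0; congr (_ * _); apply: eq_bigr => i _.
by rewrite /= -nat1r addrA.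
Qed.

Lemma rfact_lt0 (R : fieldType) (n : int) : n < 0 -> rfact n = 0 :> R.
Proof. by case: n => [m|m] h //; lia. Qed.

Lemma rfact_binom (R : numFieldType) (A a : nat) : (a <= A)%N ->
  rfact a * rfact (A - a)%N = 'C(A, a)%:R / A`!%:R :> R.
Proof.
move=> leaA; rewrite /rfact -(bin_fact leaA) !natrM invfM mulrA mulfV ?mul1r ?invfM //.
by rewrite pnatr_eq0 -lt0n bin_gt0.
Qed.

Lemma H_eq0 (R : fieldType) q (l1 l2 : int) (k : nat) :
  [|| l1 < 0, q%:Z < l1, l2 < 0, q%:Z < l2 | (q < k)%N] -> H q l1 l2 k = 0 :> R.
Proof.
move=> out_of_range.
have : [|| 2 * q%:Z - l1 - l2 - k%:Z < 0, l2 - l1 + k%:Z < 0, l1 - l2 + k%:Z < 0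
         | l1 + l2 - k%:Z < 0] by lia.
by rewrite /H; case/or4P => /rfact_lt0 ->; rewrite ?(mulr0, mul0r).
Qed.

Lemma sum_window (A : nmodType) (F : int -> A) (N q : nat) : (q <= N)%N ->
  (forall l : int, l < 0 \/ q%:Z < l -> F l = 0) ->
  \sum_(i < (N + N).+1) F (i%:Z - N%:Z) = \sum_(l < q.+1) F l%:Z.
Proof.
move=> le_qN F_out.
rewrite -(big_mkord xpredT (fun i => F (i%:Z - N%:Z))) -(big_mkord xpredT (fun l => F l%:Z)).
rewrite (@big_cat_nat _ _ _ N) //=; last by lia.
rewrite (@big_cat_nat _ _ _ (N + q.+1) N (N + N).+1) /=; [|lia|lia].
rewrite [X in X + (_ + _)]big_nat_cond [X in X + (_ + _)]big1; last first.
  by move=> i /andP[/andP[_ lt_iN] _]; apply: F_out; left; lia.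
rewrite [X in _ + (_ + X)]big_nat_cond [X in _ + (_ + X)]big1; last first.
  by move=> i /andP[/andP[le_i _] _]; apply: F_out; right; lia.
rewrite add0r addr0 -{1}(add0n N) big_addn (_ : (N + q.+1 - N = q.+1)%N); last by lia.
by apply: eq_bigr => i _; congr F; lia.
Qed.

Lemma S_sum (R : fieldType) q k :
  S q k = \sum_(l1 < q.+1) \sum_(l2 < q.+1) H q l1 l2 k :> R.
Proof.
pose G l1 := \sum_(j < (q + k + (q + k)).+1) H q l1 (j%:Z - (q + k)%:Z) k : R.
rewrite /S (@sum_window _ G _ _ (leq_addr k q)) => [|l out_l].
  apply: eq_bigr => l1 _; rewrite /G.
  rewrite (@sum_window _ (fun l2 => H q l1 l2 k) _ _ (leq_addr k q)) // => l out_l.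
  by apply: H_eq0; case: out_l => ?; lia.
by apply: big1 => j _; apply: H_eq0; case: out_l => ?; lia.
Qed.

Lemma S_gt (R : fieldType) q k : (q < k)%N -> S q k = 0 :> R.
Proof.
move=> lt_qk; rewrite S_sum big1 // => l1 _; rewrite big1 // => l2 _.
by apply: H_eq0; rewrite lt_qk !orbT.
Qed.

(* (1 - x^2) d/dx + (2q - 2) x, with (2q - 2) split to avoid truncated subtraction. *)
Definition Lop (A : comNzRingType) (q : nat) (P : {poly A}) : {poly A} :=
  (1 - 'X^2) * P^`() + ('X * P) *+ (2 * q) - ('X * P) *+ 2.

Section LopLinear.
Variables (A : comNzRingType) (q : nat).

Fact Lop_is_linear : linear (@Lop A q).
Proof. by move=> c P Q; rewrite /Lop derivD derivZ -!mul_polyC; ring. Qed.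

HB.instance Definition _ :=
  GRing.isLinear.Build A {poly A} {poly A} *:%R (@Lop A q) Lop_is_linear.

End LopLinear.

Lemma Lop_Xn (A : comNzRingType) q j :
  Lop q ('X^j : {poly A}) =
    'X^(j.-1) *+ j - 'X^(j.+1) *+ j + 'X^(j.+1) *+ (2 * q) - 'X^(j.+1) *+ 2.
Proof.
rewrite /Lop derivXn; case: j => [|j] /=.
  by rewrite !mulr0n mulr0 add0r subr0 add0r expr1 expr0 mulr1.
rewrite !exprS -!mulrnAr; ring.
Qed.

Lemma Lop_X_1subX2n (A : comNzRingType) q j :
  Lop q ('X * (1 - 'X^2) ^+ j : {poly A}) =
  (1 - 'X^2) ^+ j.+1 *+ (2 * j + 3) + (1 - 'X^2) ^+ j *+ (2 * q)
  - (1 - 'X^2) ^+ j.+1 *+ (2 * q) - (1 - 'X^2) ^+ j *+ (2 * j + 2).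
Proof.
rewrite /Lop derivM derivX deriv_exp derivB derivC derivXn /= expr1 sub0r.
by case: j => [|j] /=; rewrite ?mulr0n ?mulr0 ?addr0 ?expr0 ?expr1 ?exprS; ring.
Qed.

Lemma size_X_1subX2n (A : nzRingType) j :
  (size ('X * (1 - 'X^2) ^+ j : {poly A})%R <= (2 * j).+2)%N.
Proof.
apply: leq_trans (size_polyMleq _ _) _; rewrite size_polyX add2n ltnS.
have size_1subX2 : (size (1 - 'X^2 : {poly A})%R <= 3)%N.
  by apply: leq_trans (size_polyD _ _) _; rewrite size_polyN size_polyXn size_poly1.
apply: leq_trans (size_poly_exp_leq _ _) _; rewrite ltnS.
by move: size_1subX2; case: (size _) => [|n] /= le_n_2; rewrite ?mul0n // leq_mul2r; lia.
Qed.

Lemma sum_delta (A : nmodType) (n c : nat) (F : nat -> A) :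
  \sum_(i < n) (if i == c :> nat then F i else 0) = if (c < n)%N then F c else 0.
Proof.
rewrite -(big_mkord xpredT (fun i => if i == c then F i else 0)).
elim: n => [|n IH]; first by rewrite big_geq.
rewrite big_nat_recr //= IH ltnS.
by case: (ltngtP c n) => [_|_|->]; rewrite ?addr0 ?add0r ?leqnn.
Qed.

Lemma sum2_delta (A : nmodType) (m n a b : nat) (P : bool) (F : nat -> nat -> A) :
  \sum_(s < m) \sum_(t < n) (if [&& s == a :> nat, t == b :> nat & P] then F s t else 0)
  = if [&& (a < m)%N, (b < n)%N & P] then F a b else 0.
Proof.
case: P; last by rewrite !andbF big1 // => s _; rewrite big1 // => t _; rewrite !andbF.
transitivity (\sum_(s < m) if s == a :> nat
                 then \sum_(t < n) (if t == b :> nat then F s t else 0) else 0).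
  apply: eq_bigr => s _; case: eqP => _ /=; last by rewrite big1.
  by apply: eq_bigr => t _; rewrite andbT.
rewrite (sum_delta _ _ (fun s => \sum_(t < n) (if t == b :> nat then F s t else 0))).
by rewrite (sum_delta _ _ (F a)) andbT; case: (a < m)%N.
Qed.

Lemma sum_even_rev (A : nmodType) (F : nat -> A) n : (forall i, odd i -> F i = 0) ->
  \sum_(i < (2 * n).+1) F i = \sum_(l < n.+1) F (2 * (n - l))%N.
Proof.
move=> F_odd; rewrite -(big_mkord xpredT F) -(big_mkord xpredT (fun l => F (2 * (n - l))%N)).
elim: n => [|n IH]; first by rewrite muln0 !big_nat1.
rewrite (_ : ((2 * n.+1).+1 = (2 * n).+3)%N); last by lia.
rewrite big_nat_recr // big_nat_recr // IH F_odd /=; last by rewrite oddM.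
rewrite addr0 [RHS]big_nat_recl // subn0 addrC; congr (_ + _); congr F; lia.
Qed.

Section Bivariate.
Context {A : comNzRingType}.
Implicit Types (P : {poly {poly A}}) (a b : nat).

Definition uxy : {poly {poly A}} := 1 + 'X * 'Y.
Definition vxy : {poly {poly A}} := 'X + 'Y.

Lemma swapXY_uxy : swapXY uxy = uxy.
Proof. by rewrite /uxy rmorphD rmorph1 rmorphM /= swapXY_X swapXY_Y mulrC. Qed.

Lemma swapXY_vxy : swapXY vxy = vxy.
Proof. by rewrite /vxy rmorphD /= swapXY_X swapXY_Y addrC. Qed.

Lemma swapXY_uv a b : swapXY (uxy ^+ a * vxy ^+ b) = uxy ^+ a * vxy ^+ b.
Proof. by rewrite rmorphM !rmorphXn /= swapXY_uxy swapXY_vxy. Qed.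

Lemma size_uv a b : (size (uxy ^+ a * vxy ^+ b)%R <= (a + b).+1)%N.
Proof.
have size_Y : (size ('Y : {poly {poly A}}) <= 1)%N by exact: size_polyC_leq1.
have size_u : (size uxy <= 2)%N.
  apply: leq_trans (size_polyD _ _) _; rewrite geq_max size_poly1.
  by apply: leq_trans (size_polyMleq _ _) _; rewrite size_polyX; lia.
have size_v : (size vxy <= 2)%N.
  by apply: leq_trans (size_polyD _ _) _; rewrite geq_max size_polyX; lia.
apply: leq_trans (size_polyMleq _ _) _.
have := size_poly_exp_leq uxy a; have := size_poly_exp_leq vxy b.
by have := leq_mul2r a (size uxy).-1 1; have := leq_mul2r b (size vxy).-1 1; lia.
Qed.

Lemma coef_uv a b i j : ((uxy ^+ a * vxy ^+ b)`_i)`_j =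
  \sum_(s < a.+1) \sum_(t < b.+1)
    (if (i == s + (b - t))%N && (j == s + t)%N then ('C(a, s) * 'C(b, t))%:R else 0).
Proof.
rewrite /uxy addrC exprD1n /vxy exprDn big_distrl coef_sum coef_sum.
apply: eq_bigr => s _; rewrite big_distrr coef_sum coef_sum; apply: eq_bigr => t _ /=.
have -> : ('X * 'Y) ^+ s *+ 'C(a, s) * ('X ^+ (b - t)%N * 'Y ^+ t *+ 'C(b, t))
          = ('X^(s + t)%N)%:P * 'X^(s + (b - t))%N *+ ('C(a, s) * 'C(b, t))
          :> {poly {poly A}}.
  by rewrite mulrnAl mulrnAr -mulrnA mulnC polyC_exp !exprD exprMn; ring.
rewrite coefMn coefCM coefXn mulr_natr coefMn coefMn coefXn.
by case: (i == _); case: (j == _); rewrite /= ?mulr0n ?mul0rn ?mulr1n.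
Qed.

Lemma coef_uv_double q k l1 l2 : (k <= q)%N -> (l1 <= q)%N -> (l2 <= q)%N ->
  ((uxy ^+ (2 * q - 2 * k) * vxy ^+ (2 * k))`_(2 * (q - l1)))`_(2 * (q - l2)) =
  if [&& k <= l1 + l2, l1 + l2 + k <= 2 * q, l2 <= l1 + k & l1 <= l2 + k]%N
  then ('C(2 * q - 2 * k, 2 * q - l1 - l2 - k) * 'C(2 * k, l1 + k - l2))%:R else 0.
Proof.
move=> le_kq le_l1q le_l2q.
set valid := [&& _, _, _ & _].
transitivity (if [&& (2 * q - l1 - l2 - k < (2 * q - 2 * k).+1)%N,
                     (l1 + k - l2 < (2 * k).+1)%N & valid]
              then ('C(2 * q - 2 * k, 2 * q - l1 - l2 - k) * 'C(2 * k, l1 + k - l2))%:R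
              else 0 : A).
  rewrite coef_uv -(sum2_delta _ _ _ _ _ (fun s t => ('C(2 * q - 2 * k, s) * 'C(2 * k, t))%:R)).
  apply: eq_bigr => s _; apply: eq_bigr => t _.
  have := ltn_ord s; have := ltn_ord t => lt_t lt_s.
  by congr (if _ then _ else _); apply/idP/idP; rewrite /valid; lia.
by congr (if _ then _ else _); apply/idP/idP; rewrite /valid; lia.
Qed.

Lemma Lop_uv q a b :
  Lop q (uxy ^+ a * vxy ^+ b) =
    uxy ^+ (a.-1) * vxy ^+ (b.+1) *+ a + uxy ^+ (a.+1) * vxy ^+ (b.-1) *+ b
    + 'X * uxy ^+ a * vxy ^+ b *+ (2 * q) - 'X * uxy ^+ a * vxy ^+ b *+ (2 + a + b).
Proof.
have du : uxy^`() = 'Y by rewrite /uxy derivD derivC derivM derivX derivC; ring.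
have dv : vxy^`() = 1 by rewrite /vxy derivD derivX derivC addr0.
rewrite /Lop derivM !deriv_exp du dv.
by case: a => [|a]; case: b => [|b]; rewrite /= ?mulr0n ?expr0 ?exprS /uxy /vxy; ring.
Qed.

Lemma Lop_mulY q P : Lop q ('Y * P) = 'Y * Lop q P.
Proof. by rewrite !mul_polyC linearZ. Qed.

End Bivariate.

Section Moments.
Variable R : numFieldType.
Implicit Types (q n : nat).

(* moment q (2 (q - l)) is the factor of H_q(l1, l2, k) that depends on l = l1 or l2 alone. *)
Definition moment q n : R :=
  if odd n || (2 * q < n)%N then 0
  else (-1) ^+ (q - n./2) * poch (- 2^-1) (q - n./2)%N * poch 2^-1 n./2.

Lemma moment_odd q n : odd n -> moment q n = 0.
Proof. by rewrite /moment => ->. Qed.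

Lemma moment_gt q n : (2 * q < n)%N -> moment q n = 0.
Proof. by rewrite /moment => ->; rewrite orbT. Qed.

Lemma moment_double q i : (i <= q)%N ->
  moment q i.*2 = (-1) ^+ (q - i) * poch (- 2^-1) (q - i)%N * poch 2^-1 i.
Proof.
move=> le_iq; rewrite /moment odd_double doubleK /=.
by have -> : (2 * q < i.*2)%N = false by lia.
Qed.

Lemma moment_rec q j : (j < 2 * q)%N ->
  moment q j.-1 *+ j - moment q j.+1 *+ j + moment q j.+1 *+ (2 * q)
  - moment q j.+1 *+ 2 = 0.
Proof.
move=> lt_j2q; case/boolP: (odd j) => odd_j; last first.
  rewrite (@moment_odd q j.+1) ?odd_j // !mul0rn !subr0 addr0.
  case: j odd_j {lt_j2q} => [|j] /=; first by rewrite mulr0n.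
  by rewrite negbK => odd_j; rewrite moment_odd ?mul0rn.
have [i def_j] : exists i, j = i.*2.+1.
  by exists j./2; rewrite -[LHS]odd_double_half odd_j.
have lt_iq : (i < q)%N by rewrite def_j -mul2n in lt_j2q; lia.
rewrite {}def_j.
rewrite -doubleS /= !moment_double //; last exact: ltnW.
have [r ->] : exists r, q = (i + r).+1 by exists (q - i.+1)%N; lia.
rewrite (_ : ((i + r).+1 - i = r.+1)%N); last by lia.
rewrite (_ : ((i + r).+1 - i.+1 = r)%N); last by lia.
rewrite !poch_natS exprS -!mul2n.
have two_neq0 : (2 : R) != 0 by rewrite pnatr_eq0.
move: (poch _ r) (poch _ i) ((-1) ^+ r) => a b s.
by field.
Qed.

Section Pairing.
Variables (A : comNzRingType) (f : {additive R -> A}) (q : nat).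
Implicit Types P : {poly A}.

(* The moment functional, with values pushed into A by f: f = idfun gives lam_q
   (mom1 below), and f = polyC applies lam_q to the outer variable of a bivariate
   polynomial. *)
Definition mom (P : {poly A}) : A := \sum_(i < (2 * q).+1) P`_i * f (moment q i).

Lemma mom0 : mom 0 = 0.
Proof. by rewrite /mom big1 // => i _; rewrite coef0 mul0r. Qed.

Lemma momD : {morph mom : P Q / P + Q}.
Proof.
by move=> P Q; rewrite /mom -big_split; apply: eq_bigr => i _; rewrite coefD mulrDl.
Qed.

HB.instance Definition _ := GRing.isNmodMorphism.Build {poly A} A mom (mom0, momD).

Lemma momZ c P : mom (c *: P) = c * mom P.
Proof. by rewrite /mom mulr_sumr; apply: eq_bigr => i _; rewrite coefZ mulrA. Qed.

Lemma mom_Xn n : mom 'X^n = f (moment q n).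
Proof.
rewrite /mom; under eq_bigr => i _ do rewrite coefXn mulrb (fun_if (fun x => x * _)) mul0r.
rewrite (sum_delta _ _ (fun i => 1 * f (moment q i))) mul1r.
by case: ltnP => // lt_2q_n; rewrite moment_gt ?raddf0.
Qed.

Lemma mom_Lop_Xn j : (j < 2 * q)%N -> mom (Lop q 'X^j) = 0.
Proof.
move=> lt_j_2q; have := congr1 f (moment_rec lt_j_2q).
rewrite raddf0 Lop_Xn !(raddfB f, raddfMn f, raddfD f, raddfN f) => <-.
by rewrite !(raddfB mom, raddfMn mom, raddfD mom, raddfN mom) /= !mom_Xn.
Qed.

Lemma mom_Lop P : (size P <= 2 * q)%N -> mom (Lop q P) = 0.
Proof.
move=> le_P_2q; rewrite -[P]coefK poly_def linear_sum raddf_sum; apply: big1 => j _.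
by rewrite linearZ /= momZ mom_Lop_Xn ?mulr0 //; apply: leq_trans le_P_2q.
Qed.

End Pairing.

Notation mom1 q := (mom idfun q).

Lemma mom1_Xn q n : mom1 q 'X^n = moment q n.
Proof. exact: mom_Xn. Qed.

Lemma mom1_X_1subX2n q n : mom1 q ('X * (1 - 'X^2) ^+ n) = 0.
Proof.
have coef_odd m : odd m -> ((1 - 'X^2) ^+ n : {poly R})`_m = 0.
  elim: n m => [|n IH] m odd_m; first by rewrite expr0 coef1; case: m odd_m.
  rewrite exprS mulrBl mul1r coefB coefXnM IH // sub0r.
  case: ltnP => [_|le_2_m]; first by rewrite oppr0.
  by rewrite IH ?oppr0 //; move: odd_m le_2_m; case: m => [|[|m]] //=; rewrite subn2 /= negbK.
rewrite /mom big1 // => i _; rewrite coefXM.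
case: eqP => [_|i_neq0]; first by rewrite mul0r.
case/boolP: (odd i) => odd_i; first by rewrite moment_odd ?mulr0.
by rewrite coef_odd ?mul0r //; case: (nat_of_ord i) odd_i i_neq0 => [|m] //=; rewrite negbK.
Qed.

Definition mom2 q (P : {poly {poly R}}) : R := mom1 q (mom polyC q P).

Lemma mom2_is_nmod_morphism q : (mom2 q 0 = 0) * {morph mom2 q : P Q / P + Q}.
Proof. by split => [|P Q]; rewrite /mom2 ?raddf0 // !raddfD. Qed.

HB.instance Definition _ q :=
  GRing.isNmodMorphism.Build {poly {poly R}} R (mom2 q) (mom2_is_nmod_morphism q).

Lemma mom2D q : {morph mom2 q : P Q / P + Q}. Proof. exact: raddfD. Qed.
Lemma mom2B q : {morph mom2 q : P Q / P - Q}. Proof. exact: raddfB. Qed.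
Lemma mom2Mn q P n : mom2 q (P *+ n) = mom2 q P *+ n. Proof. exact: raddfMn. Qed.

Lemma mom2E q (P : {poly {poly R}}) : mom2 q P =
  \sum_(i < (2 * q).+1) \sum_(j < (2 * q).+1) P`_i`_j * (moment q i * moment q j).
Proof.
rewrite /mom2 {2}/mom raddf_sum; apply: eq_bigr => i _.
rewrite mulrC mul_polyC /= momZ /mom mulr_sumr; apply: eq_bigr => j _ /=; ring.
Qed.

Lemma mom2_swapXY q (P : {poly {poly R}}) : mom2 q (swapXY P) = mom2 q P.
Proof.
rewrite !mom2E exchange_big; apply: eq_bigr => i _; apply: eq_bigr => j _.
by rewrite coef_swapXY [moment q j * _]mulrC.
Qed.

Lemma mom2_sep q (p r : {poly R}) : mom2 q (p ^:P * r%:P) = mom1 q p * mom1 q r.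
Proof.
rewrite mom2E /mom big_distrl; apply: eq_bigr => i _ /=.
rewrite big_distrr; apply: eq_bigr => j _ /=.
by rewrite coefMC coef_map coefCM /=; ring.
Qed.

Lemma mom2_Lop q (P : {poly {poly R}}) : (size P <= 2 * q)%N -> mom2 q (Lop q P) = 0.
Proof. by move=> le_P_2q; rewrite /mom2 mom_Lop ?raddf0. Qed.

Lemma mom2_Y_sym q (P : {poly {poly R}}) :
  swapXY P = P -> mom2 q ('Y * P) = mom2 q ('X * P).
Proof. by move=> symP; rewrite -mom2_swapXY rmorphM /= swapXY_Y symP. Qed.

Lemma mom2_Y_vxy q (P : {poly {poly R}}) :
  swapXY P = P -> mom2 q ('Y * P) *+ 2 = mom2 q (vxy * P).
Proof. by move=> symP; rewrite /vxy mulrDl mom2D mulr2n {1}mom2_Y_sym // addrC. Qed.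

Lemma mom1_1subX2n_rec q j : (j < q)%N ->
  mom1 q ((1 - 'X^2) ^+ j.+1) *+ (2 * j + 3) + mom1 q ((1 - 'X^2) ^+ j) *+ (2 * q)
  - mom1 q ((1 - 'X^2) ^+ j.+1) *+ (2 * q) - mom1 q ((1 - 'X^2) ^+ j) *+ (2 * j + 2) = 0.
Proof.
move=> lt_jq; have le_size : ((2 * j).+2 <= 2 * q)%N by lia.
have := mom_Lop idfun (leq_trans (size_X_1subX2n R j) le_size).
by rewrite Lop_X_1subX2n !raddfB raddfD !raddfMn.
Qed.

Lemma fact_neq0 n : n`!%:R != 0 :> R.
Proof. by rewrite pnatr_eq0 -lt0n fact_gt0. Qed.

Lemma mom1_1subX2n p j : (j <= p)%N ->
  mom1 p.+1 ((1 - 'X^2) ^+ j) * (p - j)`!%:R = (-1) ^+ p / 2 * poch 2^-1 (p - j)%N * p`!%:R.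
Proof.
have two_neq0 : (2 : R) != 0 by rewrite pnatr_eq0.
elim: j => [|j IH] le_jp.
  rewrite expr0 -(expr0 'X) mom1_Xn (@moment_double p.+1 0) // !subn0 poch_natSl.
  have -> : - 2^-1 + 1 = 2^-1 :> R by field.
  have poch0 : poch (2^-1 : R) 0%N = 1 by rewrite /poch big_ord0.
  by rewrite exprS poch0; field.
have := IH (ltnW le_jp); have := mom1_1subX2n_rec (q := p.+1) (ltnW le_jp).
have [r ->] : exists r, p = (j + r).+1 by exists (p - j.+1)%N; lia.
rewrite (_ : ((j + r).+1 - j = r.+1)%N); last by lia.
rewrite (_ : ((j + r).+1 - j.+1 = r)%N); last by lia.
set n1 := mom1 _ ((1 - 'X^2) ^+ j.+1); set n0 := mom1 _ ((1 - 'X^2) ^+ j).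
move=> rec IH'.
have r21_neq0 : (2 * r).+1%:R != 0 :> R by rewrite pnatr_eq0.
have -> : n1 = n0 * (2 * r + 2)%:R / (2 * r).+1%:R.
  apply: (mulIf r21_neq0); rewrite mulfVK //.
  by apply/eqP; rewrite -subr_eq0 -oppr_eq0 -rec; apply/eqP; ring.
have -> : n0 = (-1) ^+ (j + r).+1 / 2 * poch 2^-1 r.+1 * (j + r).+1`!%:R / r.+1`!%:R.
  by rewrite -IH' mulfK ?fact_neq0.
rewrite poch_natS [r.+1`!]factS natrM.
by field; rewrite fact_neq0 -natrM !nat1r !pnatr_eq0.
Qed.

Section UVMoments.
Variable q : nat.

Definition muv a b : R := mom2 q (uxy ^+ a * vxy ^+ b).

Lemma muv_recX a b : (a + b < 2 * q)%N ->
  (muv a.-1 b.+1 *+ a + muv a.+1 b.-1 *+ b) *+ 2 + muv a b.+1 *+ (2 * q)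
  = muv a b.+1 *+ (2 + a + b).
Proof.
move=> lt_ab_2q.
have := mom2_Lop (leq_trans (size_uv a b) lt_ab_2q).
rewrite Lop_uv mom2B [X in _ - X]mom2Mn !mom2D !mom2Mn.
move=> /eqP; rewrite subr_eq0 => /eqP eq_Lop.
have mom2_X : mom2 q ('X * uxy ^+ a * vxy ^+ b) *+ 2 = muv a b.+1.
  by rewrite -mulrA -mom2_Y_sym ?swapXY_uv // mom2_Y_vxy ?swapXY_uv // /muv exprS mulrCA.
by rewrite -mom2_X ![_ *+ 2 *+ _]mulrnAC -mulrnDl eq_Lop.
Qed.

Lemma muv_recY a b : (a + b < 2 * q)%N ->
  muv a.-1 b.+2 *+ a + muv a.+1 b *+ b + (muv a.+1 b - muv a b) *+ 2 *+ (2 * q)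
  = (muv a.+1 b - muv a b) *+ 2 *+ (2 + a + b).
Proof.
move=> lt_ab_2q.
have size_YP : (size ('Y * (uxy ^+ a * vxy ^+ b) : {poly {poly R}})%R <= 2 * q)%N.
  by rewrite mul_polyC (leq_trans (size_scale_leq _ _)) // (leq_trans (size_uv a b)).
have := mom2_Lop size_YP; rewrite Lop_mulY Lop_uv mulrBr mom2B.
rewrite [X in _ - mom2 q X]mulrnAr [X in _ - X]mom2Mn !mulrDr !mom2D !mulrnAr !mom2Mn.
move=> /eqP; rewrite subr_eq0 => /eqP eq_Lop.
have sym_Y c d : mom2 q ('Y * (uxy ^+ c * vxy ^+ d)) *+ 2 = muv c d.+1.
  by rewrite mom2_Y_vxy ?swapXY_uv // /muv exprS mulrCA.
have mom2_XY : mom2 q ('Y * ('X * uxy ^+ a * vxy ^+ b)) = muv a.+1 b - muv a b.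
  by rewrite /muv -mom2B exprS; congr mom2; rewrite /uxy; ring.
have Y2_b : mom2 q ('Y * (uxy ^+ a.+1 * vxy ^+ b.-1)) *+ 2 *+ b = muv a.+1 b *+ b.
  by rewrite sym_Y; case: (b).
rewrite -mom2_XY -(sym_Y a.-1 b.+1) -Y2_b.
by rewrite ![_ *+ 2 *+ _]mulrnAC -!mulrnDl eq_Lop.
Qed.

Definition muv_odd i := muv (2 * q - 1 - 2 * i) (2 * i).
Definition muv_even k := muv (2 * q - 2 * k) (2 * k).

Lemma muv_odd_rec i : (i.+2 <= q)%N ->
  muv_odd i.+1 *+ (2 * q - 2 - 2 * i) + muv_odd i *+ (2 * i) = 0.
Proof.
move=> lt_i2_q; have := muv_recY (a := 2 * q - 2 - 2 * i) (b := 2 * i) ltac:(lia).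
rewrite (_ : (2 + (2 * q - 2 - 2 * i) + 2 * i = 2 * q)%N); last by lia.
move/eqP; rewrite -subr_eq0 addrK => /eqP.
rewrite (_ : ((2 * q - 2 - 2 * i).-1 = 2 * q - 1 - 2 * i.+1)%N); last by lia.
rewrite (_ : ((2 * i).+2 = 2 * i.+1)%N); last by lia.
by rewrite (_ : ((2 * q - 2 - 2 * i).+1 = 2 * q - 1 - 2 * i)%N); last by lia.
Qed.

Lemma muv_odd_eq0 i : (0 < i < q)%N -> muv_odd i = 0.
Proof.
elim: i => [//|i IH] /andP[_ lt_i1_q].
have odd_i0 : muv_odd i *+ (2 * i) = 0.
  case: i IH lt_i1_q => [|i] IH lt_i2_q; first by rewrite muln0 mulr0n.
  by rewrite IH ?mul0rn //; lia.
apply: (@pmulrnI _ (2 * q - 2 - 2 * i)); first by lia.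
by rewrite mul0rn -(muv_odd_rec lt_i1_q) odd_i0 addr0.
Qed.

Lemma muv_even_odd k : (0 < k <= q)%N ->
  muv_even k = (muv_odd k *+ (2 * q - 2 * k) + muv_odd k.-1 *+ (2 * k - 1)) *+ 2.
Proof.
move=> /andP[k_gt0 le_kq].
have := muv_recX (a := 2 * q - 2 * k) (b := 2 * k - 1) ltac:(lia).
rewrite (_ : (2 + (2 * q - 2 * k) + (2 * k - 1) = (2 * q).+1)%N); last by lia.
rewrite [in RHS]mulrSr addrC => /addrI.
rewrite (_ : ((2 * k - 1).+1 = 2 * k)%N); last by lia.
rewrite (_ : ((2 * q - 2 * k).-1 = 2 * q - 1 - 2 * k)%N); last by lia.
rewrite (_ : ((2 * q - 2 * k).+1 = 2 * q - 1 - 2 * k.-1)%N); last by lia.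
rewrite (_ : ((2 * k - 1).-1 = 2 * k.-1)%N); last by lia.
by rewrite /muv_even /muv_odd => <-.
Qed.

Lemma muv_even_eq0 k : (1 < k <= q)%N -> muv_even k = 0.
Proof.
move=> /andP[k_gt1 le_kq]; rewrite muv_even_odd ?(ltnW k_gt1) //.
rewrite (@muv_odd_eq0 k.-1); last by lia.
case: (ltngtP k q) le_kq => // [lt_kq|->] _; last by rewrite !(subnn, mulr0n, mul0rn, addr0).
by rewrite muv_odd_eq0 ?(mul0rn, addr0) //; lia.
Qed.

Lemma muv_even1 : (0 < q)%N -> muv_even 1 = muv_odd 0 *+ 2.
Proof.
move=> q_gt0; rewrite muv_even_odd ?q_gt0 //.
case: (ltngtP 1 q) q_gt0 => // [lt_1q|<-] _; last by rewrite mulr0n add0r.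
by rewrite muv_odd_eq0 ?lt_1q // mul0rn add0r.
Qed.

Lemma muv_even0 : (0 < q)%N -> muv_even 0 = muv_odd 0 *+ (2 * q).
Proof.
move=> q_gt0; have := muv_recY (a := 2 * q - 1) (b := 0) ltac:(lia).
rewrite (_ : (2 + (2 * q - 1) + 0 = (2 * q).+1)%N); last by lia.
rewrite mulr0n addr0 [in RHS]mulrSr addrC => /addrI.
rewrite (_ : ((2 * q - 1).-1 = 2 * q - 2 * 1)%N); last by lia.
rewrite (_ : ((2 * q - 1).+1 = 2 * q - 2 * 0)%N); last by lia.
rewrite -/(muv_even 1) muv_even1 // -mulrnA mulnC mulrnA => /(pmulrnI (isT : 0 < 2)%N).
rewrite /muv_even /muv_odd !muln0 !subn0 => /eqP; rewrite eq_sym subr_eq => /eqP ->.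
by rewrite -mulrSr; congr (_ *+ _); lia.
Qed.

(* Expand u (u^2 - v^2)^(q-1) binomially: only the term u^(2q-1) survives, while
   u^2 - v^2 = (1 - X^2)(1 - Y^2) makes the product separate. *)
Lemma muv_odd0 : (0 < q)%N -> muv_odd 0 = mom1 q ((1 - 'X^2) ^+ q.-1) ^+ 2.
Proof.
move=> q_gt0; set F : {poly R} := (1 - 'X^2) ^+ q.-1.
have -> : mom1 q F ^+ 2 = mom2 q (uxy * (uxy ^+ 2 - vxy ^+ 2) ^+ q.-1).
  have -> : (uxy ^+ 2 - vxy ^+ 2) ^+ q.-1 = F ^:P * F%:P.
    rewrite /F rmorphXn /= polyC_exp -exprMn; congr (_ ^+ _).
    by rewrite rmorphB rmorph1 /= map_polyXn polyCB polyC1 polyC_exp /uxy /vxy; ring.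
  have -> : uxy * (F ^:P * F%:P) = F ^:P * F%:P + ('X * F) ^:P * ('X * F)%:P.
    by rewrite rmorphM /= map_polyX polyCM /uxy; ring.
  by rewrite mom2D !mom2_sep mom1_X_1subX2n mulr0 addr0 expr2.
rewrite exprBn mulr_sumr raddf_sum big_ord_recl big1 ?addr0 /=.
  rewrite !expr0 mul1r mulr1 bin0 mulr1n subn0 -exprM -exprS /muv_odd /muv.
  rewrite muln0 subn0 expr0 mulr1.
  by have -> : (2 * q - 1 = (2 * q.-1).+1)%N by lia.
move=> i _; have -> : bump 0 i = i.+1 by [].
rewrite mulrnAr mom2Mn mulrA [uxy * _]mulrCA -!mulrA -signr_odd mulr_sign.
rewrite mulrA -exprM -exprS -exprM (fun_if (mom2 q)) raddfN /=.
have lt_i1_q : (0 < i.+1 < q)%N by have := ltn_ord i; lia.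
have := muv_odd_eq0 lt_i1_q; rewrite /muv_odd /muv.
have -> : (2 * q - 1 - 2 * i.+1 = (2 * (q.-1 - i.+1)).+1)%N by lia.
by move=> ->; rewrite oppr0 if_same mul0rn.
Qed.

End UVMoments.

Lemma mom2_even q (P : {poly {poly R}}) : mom2 q P =
  \sum_(l1 < q.+1) \sum_(l2 < q.+1) P`_(2 * (q - l1))`_(2 * (q - l2))
    * (moment q (2 * (q - l1)) * moment q (2 * (q - l2))).
Proof.
pose G i := \sum_(j < (2 * q).+1) P`_i`_j * (moment q i * moment q j).
rewrite mom2E (sum_even_rev (F := G)) => [|i odd_i]; last first.
  by rewrite /G big1 // => j _; rewrite (moment_odd _ odd_i) mul0r mulr0.
apply: eq_bigr => l1 _; rewrite /G.
pose G' j := P`_(2 * (q - l1))`_j * (moment q (2 * (q - l1)) * moment q j).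
rewrite (sum_even_rev (F := G')) // => j odd_j.
by rewrite /G' (moment_odd _ odd_j) !mulr0.
Qed.

Lemma H_nat q k l1 l2 : (k <= q)%N -> (l1 <= q)%N -> (l2 <= q)%N ->
  H q l1 l2 k = moment q (2 * (q - l1)) * moment q (2 * (q - l2))
    * ((uxy ^+ (2 * q - 2 * k) * vxy ^+ (2 * k))`_(2 * (q - l1)))`_(2 * (q - l2))
    / ((2 * q - 2 * k)`!%:R * (2 * k)`!%:R).
Proof.
move=> le_kq le_l1q le_l2q; rewrite coef_uv_double //.
have moment_l l : (l <= q)%N ->
    moment q (2 * (q - l)) = (-1) ^+ l * poch (- 2^-1) l * poch 2^-1 (q - l)%N.
  by move=> le_lq; rewrite mul2n moment_double ?leq_subr // subKn.
rewrite !moment_l // /H -PoszD -exprnP exprD (subzn le_l1q) (subzn le_l2q).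
case: ifP => valid; last first.
  have : [|| 2 * q%:Z - l1%:Z - l2%:Z - k%:Z < 0, l2%:Z - l1%:Z + k%:Z < 0,
             l1%:Z - l2%:Z + k%:Z < 0 | l1%:Z + l2%:Z - k%:Z < 0].
    by move/negbT: valid; lia.
  by case/or4P => /rfact_lt0 ->; rewrite ?(mulr0, mul0r).
rewrite (_ : 2 * q%:Z - l1%:Z - l2%:Z - k%:Z = (2 * q - l1 - l2 - k)%N); last by lia.
rewrite (_ : l2%:Z - l1%:Z + k%:Z = (2 * k - (l1 + k - l2))%N); last by lia.
rewrite (_ : l1%:Z - l2%:Z + k%:Z = (l1 + k - l2)%N); last by lia.
rewrite (_ : l1%:Z + l2%:Z - k%:Z = (2 * q - 2 * k - (2 * q - l1 - l2 - k))%N); last by lia.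
have binomE (a b : nat) : (b <= a)%N -> 'C(a, b)%:R = rfact b * rfact (a - b)%N * a`!%:R :> R.
  by move=> le_ba; rewrite rfact_binom // mulfVK ?fact_neq0.
rewrite natrM !binomE; [|lia|lia].
by field; apply/andP; split; apply: fact_neq0.
Qed.

Lemma S_muv_even q k : (k <= q)%N ->
  S q k = muv_even q k / ((2 * q - 2 * k)`!%:R * (2 * k)`!%:R) :> R.
Proof.
move=> le_kq; rewrite S_sum /muv_even /muv mom2_even mulr_suml; apply: eq_bigr => l1 _.
rewrite mulr_suml; apply: eq_bigr => l2 _.
have lt_l1 := ltn_ord l1; have lt_l2 := ltn_ord l2.
rewrite H_nat; [ring | exact: le_kq | exact: lt_l1 | exact: lt_l2].
Qed.

Lemma muv_odd0_succ p : muv_odd p.+1 0 = p`!%:R ^+ 2 / 4.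
Proof.
rewrite muv_odd0 //=; have := mom1_1subX2n (leqnn p).
rewrite subnn fact0 mulr1 [poch _ _]/poch big_ord0 mulr1 => ->.
have sign_sq : ((-1) ^+ p : R) ^+ 2 = 1.
  by rewrite -exprM mulnC exprM expr2 mulN1r opprK expr1n.
have two_neq0 : (2 : R) != 0 by rewrite pnatr_eq0.
by rewrite !exprMn sign_sq; field.
Qed.

End Moments.

Lemma S_eq0 (R : numFieldType) q k : (0 < q)%N -> (1 < k)%N -> S q k = 0 :> R.
Proof.
move=> q_gt0 k_gt1; case: (leqP k q) => [le_kq|]; last exact: S_gt.
by rewrite S_muv_even // muv_even_eq0 ?mul0r // k_gt1.
Qed.

Lemma S_succ0 (R : numFieldType) p : S p.+1 0 = p`!%:R ^+ 2 / (4 * (2 * p).+1`!%:R) :> R.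
Proof.
rewrite S_muv_even // muv_even0 // muv_odd0_succ !muln0 subn0 fact0 mulr1.
rewrite (_ : (2 * p.+1 = (2 * p).+2)%N); last by lia.
rewrite factS natrM -mulr_natr.
by field; rewrite fact_neq0 -natrM -natrD pnatr_eq0.
Qed.

Lemma S_succ1 (R : numFieldType) p : S p.+1 1 = p`!%:R ^+ 2 / (4 * (2 * p)`!%:R) :> R.
Proof.
rewrite S_muv_even // muv_even1 // muv_odd0_succ muln1.
rewrite (_ : (2 * p.+1 - 2 = 2 * p)%N); last by lia.
rewrite (_ : 2`! = 2)%N // -mulr_natr.
by field; rewrite fact_neq0.
Qed.

Theorem lemma7p5 (R : realFieldType) (q k : nat) :
  (1 <= q)%N -> k != (q + 2)%N ->
  let qr : R := q%:R in
  let kr : R := k%:R in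
  qr ^+ 2 / (8 * (2 * kr - 2 * qr - 3) * (kr - qr - 2)) * S q k
  + (4 * kr * qr - 4 * qr ^+ 2 + 2 * kr - 7 * qr - 4)
      / (4 * (2 * kr - 2 * qr - 3) * (kr - qr - 2)) * S q.+1 k
  + S q.+2 k = 0.
Proof.
move=> q_gt0 k_neq qr kr.
have [k_gt1|k_le1] := ltnP 1 k; first by rewrite !S_eq0 // !mulr0 !addr0.
have [p def_q] : exists p, q = p.+1 by exists q.-1; lia.
rewrite /qr /kr def_q {qr kr def_q q_gt0 k_neq}.
have p_ge0 : (0 : R) <= p%:R := ler0n _ _.
case: k k_le1 => [|[|]] // _.
- rewrite !S_succ0 (_ : ((2 * p.+1).+1 = (2 * p).+3)%N); last by lia.
  rewrite (_ : ((2 * p.+2).+1 = (2 * p).+4.+1)%N); last by lia.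
  rewrite !factS !natrM.
  by field; rewrite fact_neq0 /=; do ![apply/andP; split]; apply/eqP => eq0; lra.
rewrite !S_succ1 (_ : (2 * p.+1 = (2 * p).+2)%N); last by lia.
rewrite (_ : (2 * p.+2 = (2 * p).+4)%N); last by lia.
rewrite !factS !natrM.
by field; rewrite fact_neq0 /=; do ![apply/andP; split]; apply/eqP => eq0; lra.
Qed.
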